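(* Let $d\in\mathbb{N}$ and, for $(a,b)\in\mathbb{R}^2$, let $H_{(a,b,d)}$ denote the polynomial system $h_1(x,y)=x^{2d}+ay^d-y=0$, $h_2(x,y)=y^{2d}+bx^d-x=0$. Let $E_d\subseteq\mathbb{R}^2$ be the set of all $(a,b)$ such that $H_{(a,b,d)}$ has at least $5$ non-degenerate isolated roots in the open positive quadrant $\mathbb{R}^2_+=\{(x,y): x>0,\ y>0\}$. Then $E_d$ is an open subset of $\mathbb{R}^2$ and is symmetric about the line $\{a=b\}$ (i.e. $(a,b)\in E_d$ if and only if $(b,a)\in E_d$).
   Context: A root $z$ of a polynomial system $F=(f_1,f_2)$ in two variables is non-degenerate if the Jacobian matrix of $F$ at $z$ is invertible. *)

From Stdlib Require Import Reals List.
From Coquelicot Require Import Coquelicot.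
Open Scope R_scope.

Definition h1 (a b : R) (d : nat) (p : R * R) : R :=
  (fst p) ^ (2 * d) + a * (snd p) ^ d - snd p.
Definition h2 (a b : R) (d : nat) (p : R * R) : R :=
  (snd p) ^ (2 * d) + b * (fst p) ^ d - fst p.

Definition is_root (a b : R) (d : nat) (p : R * R) : Prop :=
  h1 a b d p = 0 /\ h2 a b d p = 0.

Definition partial_x (f : R * R -> R) (p : R * R) : R :=
  Derive (fun x => f (x, snd p)) (fst p).
Definition partial_y (f : R * R -> R) (p : R * R) : R :=
  Derive (fun y => f (fst p, y)) (snd p).

Definition jacobian_det (a b : R) (d : nat) (p : R * R) : R :=
  partial_x (h1 a b d) p * partial_y (h2 a b d) p
  - partial_y (h1 a b d) p * partial_x (h2 a b d) p.

Definition nondegenerate_root (a b : R) (d : nat) (p : R * R) : Prop :=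
  is_root a b d p /\ jacobian_det a b d p <> 0.

Definition isolated_root (a b : R) (d : nat) (p : R * R) : Prop :=
  is_root a b d p /\ locally p (fun q => q = p \/ ~ is_root a b d q).

Definition in_positive_quadrant (p : R * R) : Prop := 0 < fst p /\ 0 < snd p.

Definition E (d : nat) : R * R -> Prop :=
  fun ab => exists l : list (R * R),
    NoDup l /\ (5 <= length l)%nat /\
    List.Forall (fun p => in_positive_quadrant p /\
                     nondegenerate_root (fst ab) (snd ab) d p /\
                     isolated_root (fst ab) (snd ab) d p) l.

From Stdlib Require Import Reals List FinFun Lra Lia.
From Coquelicot Require Import Coquelicot.
Open Scope R_scope.

(* Symmetry: (x, y) |-> (y, x) maps the roots of H_(a,b,d) onto those of H_(b,a,d) and
   preserves the Jacobian determinant.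
   Openness: a nondegenerate root p0 of H_(a0,b0,d) persists.  With J the Jacobian at p0,
   the chord map q |-> q - J^-1 H_(a,b,d)(q) is a 1/2-contraction of a small square around
   p0 for all (a, b) near (a0, b0): by the mean value theorem the increments of H are given
   by a matrix of Jacobian entries at intermediate points, which is close to J by continuity.
   Its fixed point is a root of H_(a,b,d); it is isolated because it is the only root in the
   square, and nondegenerate because its Jacobian is still close to J.  Finitely many
   distinct roots are uniformly separated, so their perturbations remain distinct. *)

Definition dist_max (p q : R * R) : R :=
  Rmax (Rabs (fst p - fst q)) (Rabs (snd p - snd q)).

Lemma dist_max_fst p q : Rabs (fst p - fst q) <= dist_max p q.
Proof. apply Rmax_l. Qed.

Lemma dist_max_snd p q : Rabs (snd p - snd q) <= dist_max p q.
Proof. apply Rmax_r. Qed.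

Lemma dist_max_nonneg p q : 0 <= dist_max p q.
Proof. eapply Rle_trans; [apply Rabs_pos | apply dist_max_fst]. Qed.

Lemma dist_max_lub p q s :
  Rabs (fst p - fst q) <= s -> Rabs (snd p - snd q) <= s -> dist_max p q <= s.
Proof. apply Rmax_lub. Qed.

Lemma dist_max_comm p q : dist_max p q = dist_max q p.
Proof. unfold dist_max. now rewrite (Rabs_minus_sym (fst p)), (Rabs_minus_sym (snd p)). Qed.

Lemma dist_max_self p : dist_max p p = 0.
Proof. unfold dist_max. rewrite !Rminus_diag, Rabs_R0. apply Rmax_left; lra. Qed.

Lemma dist_max_triangle p q s : dist_max p s <= dist_max p q + dist_max q s.
Proof.
  pose proof (dist_max_fst p q); pose proof (dist_max_snd p q).
  pose proof (dist_max_fst q s); pose proof (dist_max_snd q s).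
  apply dist_max_lub.
  - replace (fst p - fst s) with ((fst p - fst q) + (fst q - fst s)) by ring.
    eapply Rle_trans; [apply Rabs_triang | lra].
  - replace (snd p - snd s) with ((snd p - snd q) + (snd q - snd s)) by ring.
    eapply Rle_trans; [apply Rabs_triang | lra].
Qed.

Lemma dist_max_le_0 p q : dist_max p q <= 0 -> p = q.
Proof.
  intro H. pose proof (dist_max_fst p q); pose proof (dist_max_snd p q).
  pose proof (Rabs_pos (fst p - fst q)); pose proof (Rabs_pos (snd p - snd q)).
  apply injective_projections; apply Rminus_diag_uniq, Rabs_eq_0; lra.
Qed.

Lemma dist_max_pos p q : p <> q -> 0 < dist_max p q.
Proof. intro Hne. apply Rnot_le_lt. intro H. now apply Hne, dist_max_le_0. Qed.

Lemma dist_max_le_half p q : dist_max p q <= dist_max p q / 2 -> p = q.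
Proof. intro H. apply dist_max_le_0. lra. Qed.

Lemma is_lim_seq_dist_le (v : nat -> R) (l a B : R) (N : nat) :
  is_lim_seq v l -> (forall n, (N <= n)%nat -> Rabs (v n - a) <= B) -> Rabs (l - a) <= B.
Proof.
  intros Hv Hle.
  assert (Hlim : is_lim_seq (fun n => Rabs (v n - a)) (Rabs (l - a))).
  { apply (is_lim_seq_abs _ (Finite (l - a))).
    apply is_lim_seq_minus'; [exact Hv | apply is_lim_seq_const]. }
  exact (is_lim_seq_le_loc _ _ _ _ (ex_intro _ N Hle) Hlim (is_lim_seq_const B)).
Qed.

Lemma le_0_of_le_geom (k x a : R) : 0 <= k < 1 -> (forall n, x <= a * k ^ n) -> x <= 0.
Proof.
  intros Hk Hle.
  assert (Hgeom : is_lim_seq (fun n => a * k ^ n) (a * 0)).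
  { apply (is_lim_seq_scal_l _ a 0), is_lim_seq_geom. rewrite Rabs_pos_eq; lra. }
  rewrite Rmult_0_r in Hgeom.
  exact (is_lim_seq_le _ _ x 0 Hle (is_lim_seq_const x) Hgeom).
Qed.

Section Contraction.

Variables (T : R * R -> R * R) (c : R * R) (r k : R).
Hypothesis k_ge0 : 0 <= k.
Hypothesis k_lt1 : k < 1.
Hypothesis r_ge0 : 0 <= r.
Hypothesis T_maps : forall q, dist_max q c <= r -> dist_max (T q) c <= r.
Hypothesis T_lip : forall q q', dist_max q c <= r -> dist_max q' c <= r ->
  dist_max (T q) (T q') <= k * dist_max q q'.

Let u n := Nat.iter n T c.
Let C := dist_max (T c) c / (1 - k).

Let C_ge0 : 0 <= C.
Proof. apply Rdiv_le_0_compat; [apply dist_max_nonneg | lra]. Qed.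

Lemma iter_in_ball n : dist_max (u n) c <= r.
Proof.
  induction n as [|n IH]; simpl.
  - now rewrite dist_max_self.
  - now apply T_maps.
Qed.

Lemma iter_step n : dist_max (u (S n)) (u n) <= k ^ n * dist_max (T c) c.
Proof.
  induction n as [|n IH]; [simpl; lra|].
  change (dist_max (T (u (S n))) (T (u n)) <= k * k ^ n * dist_max (T c) c).
  eapply Rle_trans; [apply T_lip; apply iter_in_ball|].
  rewrite Rmult_assoc. apply Rmult_le_compat_l; assumption.
Qed.

(* The geometric sum [k^n + ... + k^(n+m-1)] of the step bounds, in closed form. *)
Lemma iter_tail n m : dist_max (u (n + m)%nat) (u n) <= C * (k ^ n - k ^ (n + m)).
Proof.
  induction m as [|m IH].
  - rewrite Nat.add_0_r, dist_max_self, Rminus_diag. lra.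
  - rewrite Nat.add_succ_r. eapply Rle_trans; [apply dist_max_triangle|].
    eapply Rle_trans; [apply Rplus_le_compat; [apply iter_step | exact IH]|].
    unfold C. rewrite <- Nat.add_succ_r, pow_add, pow_add. simpl.
    right. field. lra.
Qed.

Lemma iter_tail_le n m : dist_max (u (n + m)%nat) (u n) <= C * k ^ n.
Proof.
  pose proof C_ge0; pose proof (pow_le k (n + m) k_ge0).
  eapply Rle_trans; [apply iter_tail | nra].
Qed.

Lemma iter_coord_cauchy (f : R * R -> R) :
  (forall p q, Rabs (f p - f q) <= dist_max p q) -> ex_lim_seq_cauchy (fun n => f (u n)).
Proof.
  intros Hf eps. pose proof C_ge0.
  destruct (pow_lt_1_zero k ltac:(rewrite Rabs_pos_eq; lra) (eps / (C + 1)))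
    as [N HN]; [apply Rdiv_lt_0_compat; [apply cond_pos | lra]|].
  assert (Hsmall : forall n, (N <= n)%nat -> C * k ^ n < eps).
  { intros n Hn. specialize (HN n Hn). rewrite Rabs_pos_eq in HN by (apply pow_le; lra).
    pose proof (cond_pos eps).
    apply Rmult_lt_compat_l with (r := C + 1) in HN; [|lra].
    replace ((C + 1) * (eps / (C + 1))) with (pos eps) in HN by (field; lra).
    pose proof (pow_le k n k_ge0). nra. }
  exists N. intros n m Hn Hm.
  destruct (Nat.le_ge_cases n m) as [Hnm | Hnm].
  - replace m with (n + (m - n))%nat by lia. rewrite Rabs_minus_sym.
    eapply Rle_lt_trans; [apply Hf|]. eapply Rle_lt_trans; [apply iter_tail_le | auto].
  - replace n with (m + (n - m))%nat by lia.
    eapply Rle_lt_trans; [apply Hf|]. eapply Rle_lt_trans; [apply iter_tail_le | auto].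
Qed.

Let limit := (real (Lim_seq (fun n => fst (u n))), real (Lim_seq (fun n => snd (u n)))).

Lemma iter_limit_dist_le p B N :
  (forall n, (N <= n)%nat -> dist_max (u n) p <= B) -> dist_max limit p <= B.
Proof.
  intro Hle. apply dist_max_lub.
  - apply (is_lim_seq_dist_le (fun n => fst (u n)) _ _ _ N).
    + apply Lim_seq_correct', ex_lim_seq_cauchy_corr, iter_coord_cauchy, dist_max_fst.
    + intros n Hn. eapply Rle_trans; [apply dist_max_fst | auto].
  - apply (is_lim_seq_dist_le (fun n => snd (u n)) _ _ _ N).
    + apply Lim_seq_correct', ex_lim_seq_cauchy_corr, iter_coord_cauchy, dist_max_snd.
    + intros n Hn. eapply Rle_trans; [apply dist_max_snd | auto].
Qed.

Theorem contraction_fixed_point : exists q, dist_max q c <= r /\ T q = q.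
Proof.
  assert (L_ball : dist_max limit c <= r).
  { apply iter_limit_dist_le with (N := O). intros n _. apply iter_in_ball. }
  assert (L_close : forall n, dist_max limit (u n) <= C * k ^ n).
  { intro n. apply iter_limit_dist_le with (N := n). intros m Hm.
    replace m with (n + (m - n))%nat by lia. apply iter_tail_le. }
  exists limit. split; [exact L_ball|].
  apply dist_max_le_0, (le_0_of_le_geom k _ (2 * C * k)); [lra|]. intro n.
  eapply Rle_trans; [apply (dist_max_triangle _ (u (S n)))|].
  rewrite (dist_max_comm (u (S n))).
  assert (Hstep : dist_max (T limit) (T (u n)) <= k * (C * k ^ n)).
  { eapply Rle_trans; [apply T_lip; auto; apply iter_in_ball|].
    apply Rmult_le_compat_l; auto. }
  change (u (S n)) with (T (u n)). pose proof (L_close (S n)) as Hnext.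
  change (u (S n)) with (T (u n)) in Hnext. simpl in Hnext. lra.
Qed.

End Contraction.

Lemma Rmin4_le a b c d :
  Rmin (Rmin a b) (Rmin c d) <= a /\ Rmin (Rmin a b) (Rmin c d) <= b /\
  Rmin (Rmin a b) (Rmin c d) <= c /\ Rmin (Rmin a b) (Rmin c d) <= d.
Proof.
  pose proof (Rmin_l (Rmin a b) (Rmin c d)); pose proof (Rmin_r (Rmin a b) (Rmin c d)).
  pose proof (Rmin_l a b); pose proof (Rmin_r a b); pose proof (Rmin_l c d); pose proof (Rmin_r c d).
  lra.
Qed.

Lemma Rabs_lincomb_le e f u v eps n :
  Rabs e <= eps -> Rabs f <= eps -> Rabs u <= n -> Rabs v <= n ->
  Rabs (e * u + f * v) <= 2 * eps * n.
Proof.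
  intros He Hf Hu Hv. eapply Rle_trans; [apply Rabs_triang|]. rewrite !Rabs_mult.
  pose proof (Rabs_pos e); pose proof (Rabs_pos f); pose proof (Rabs_pos u); pose proof (Rabs_pos v).
  assert (Rabs e * Rabs u <= eps * n) by (apply Rmult_le_compat; lra).
  assert (Rabs f * Rabs v <= eps * n) by (apply Rmult_le_compat; lra).
  lra.
Qed.

Lemma Rabs_sub_mult_le P Q X Y k :
  Rabs X <= k -> Rabs Y <= k -> Rabs (P * X - Q * Y) <= (Rabs P + Rabs Q) * k.
Proof.
  intros HX HY. unfold Rminus. eapply Rle_trans; [apply Rabs_triang|].
  rewrite Rabs_Ropp, !Rabs_mult.
  pose proof (Rabs_pos P); pose proof (Rabs_pos Q).
  assert (Rabs P * Rabs X <= Rabs P * k) by (apply Rmult_le_compat_l; lra).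
  assert (Rabs Q * Rabs Y <= Rabs Q * k) by (apply Rmult_le_compat_l; lra).
  lra.
Qed.

Lemma Rabs_div_le N D k : D <> 0 -> Rabs N <= k * Rabs D -> Rabs (N / D) <= k.
Proof.
  intros HD H. unfold Rdiv. rewrite Rabs_mult, Rabs_inv.
  assert (0 < Rabs D) by (apply Rabs_pos_lt; auto).
  apply (Rmult_le_reg_r (Rabs D)); auto. rewrite Rmult_assoc, Rinv_l by lra. lra.
Qed.

Definition mat_close (eps A B C D A' B' C' D' : R) : Prop :=
  Rabs (A' - A) <= eps /\ Rabs (B' - B) <= eps /\ Rabs (C' - C) <= eps /\ Rabs (D' - D) <= eps.

Lemma det_close_neq0 eps A B C D A' B' C' D' :
  mat_close eps A B C D A' B' C' D' -> eps <= 1 ->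
  (Rabs A + Rabs B + Rabs C + Rabs D + 2) * eps < Rabs (A * D - B * C) ->
  A' * D' - B' * C' <> 0.
Proof.
  intros (HA & HB & HC & HD) Heps1 Hdet Hzero.
  assert (Hid : A * D - B * C = (A' * D' - B' * C')
      - (A * (D' - D) + (A' - A) * D + (A' - A) * (D' - D)
         - (B * (C' - C) + (B' - B) * C + (B' - B) * (C' - C)))) by ring.
  apply (f_equal Rabs) in Hid. rewrite Hzero, Rminus_0_l, Rabs_Ropp in Hid.
  assert (Hprod : forall P Q p q, Rabs P <= p -> Rabs Q <= q -> Rabs (P * Q) <= p * q).
  { intros P Q p q HP HQ. rewrite Rabs_mult. apply Rmult_le_compat; auto using Rabs_pos. }
  pose proof (Hprod A (D' - D) _ _ (Rle_refl _) HD).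
  pose proof (Hprod (A' - A) D _ _ HA (Rle_refl _)).
  pose proof (Hprod (A' - A) (D' - D) _ _ HA HD).
  pose proof (Hprod B (C' - C) _ _ (Rle_refl _) HC).
  pose proof (Hprod (B' - B) C _ _ HB (Rle_refl _)).
  pose proof (Hprod (B' - B) (C' - C) _ _ HB HC).
  pose proof (Rabs_triang (A * (D' - D)) ((A' - A) * D)).
  pose proof (Rabs_triang (A * (D' - D) + (A' - A) * D) ((A' - A) * (D' - D))).
  pose proof (Rabs_triang (B * (C' - C)) ((B' - B) * C)).
  pose proof (Rabs_triang (B * (C' - C) + (B' - B) * C) ((B' - B) * (C' - C))).
  pose proof (Rabs_triang (A * (D' - D) + (A' - A) * D + (A' - A) * (D' - D))
                (- (B * (C' - C) + (B' - B) * C + (B' - B) * (C' - C)))) as Hsplit.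
  rewrite Rabs_Ropp in Hsplit. fold (Rminus (A * (D' - D) + (A' - A) * D + (A' - A) * (D' - D))
                (B * (C' - C) + (B' - B) * C + (B' - B) * (C' - C))) in Hsplit.
  assert (0 <= eps) by (eapply Rle_trans; [apply Rabs_pos | exact HA]).
  assert (eps * eps <= eps) by nra.
  lra.
Qed.

(* One step of the chord method [q - J^-1 g(q)] with the exact increment [J' (dx, dy)]. *)
Lemma chord_step_contracts eps A B C D A' B' C' D' dx dy :
  A * D - B * C <> 0 -> mat_close eps A B C D A' B' C' D' ->
  4 * (Rabs A + Rabs B + Rabs C + Rabs D) * eps <= Rabs (A * D - B * C) ->
  Rabs (dx - (D * (A' * dx + B' * dy) - B * (C' * dx + D' * dy)) / (A * D - B * C))
    <= Rmax (Rabs dx) (Rabs dy) / 2 /\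
  Rabs (dy - (A * (C' * dx + D' * dy) - C * (A' * dx + B' * dy)) / (A * D - B * C))
    <= Rmax (Rabs dx) (Rabs dy) / 2.
Proof.
  intros Hdet (HA & HB & HC & HD) Hsmall.
  set (n := Rmax (Rabs dx) (Rabs dy)).
  assert (Hdx : Rabs dx <= n) by apply Rmax_l.
  assert (Hdy : Rabs dy <= n) by apply Rmax_r.
  assert (Hn : 0 <= n) by (eapply Rle_trans; [apply Rabs_pos | exact Hdx]).
  pose proof (Rabs_lincomb_le _ _ _ _ _ _ HA HB Hdx Hdy) as Hrow1.
  pose proof (Rabs_lincomb_le _ _ _ _ _ _ HC HD Hdx Hdy) as Hrow2.
  pose proof (Rabs_pos A); pose proof (Rabs_pos B); pose proof (Rabs_pos C); pose proof (Rabs_pos D).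
  assert (Heps : 0 <= eps) by (eapply Rle_trans; [apply Rabs_pos | exact HA]).
  assert (Hbudget : forall P Q, Rabs P + Rabs Q <= Rabs A + Rabs B + Rabs C + Rabs D ->
            (Rabs P + Rabs Q) * (2 * eps * n) <= n / 2 * Rabs (A * D - B * C)).
  { intros P Q HPQ.
    assert (Hm : 0 <= 2 * eps * n) by (apply Rmult_le_pos; lra).
    apply Rmult_le_compat_r with (r := 2 * eps * n) in HPQ; [|exact Hm].
    apply Rmult_le_compat_r with (r := n / 2) in Hsmall; [|lra].
    lra. }
  set (Dt := A * D - B * C) in *. split.
  - replace (dx - (D * (A' * dx + B' * dy) - B * (C' * dx + D' * dy)) / Dt)
      with (- (D * ((A' - A) * dx + (B' - B) * dy) - B * ((C' - C) * dx + (D' - D) * dy)) / Dt)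
      by (unfold Dt in *; field; auto).
    apply Rabs_div_le; auto. rewrite Rabs_Ropp.
    eapply Rle_trans; [apply Rabs_sub_mult_le; eauto | apply Hbudget; lra].
  - replace (dy - (A * (C' * dx + D' * dy) - C * (A' * dx + B' * dy)) / Dt)
      with (- (A * ((C' - C) * dx + (D' - D) * dy) - C * ((A' - A) * dx + (B' - B) * dy)) / Dt)
      by (unfold Dt in *; field; auto).
    apply Rabs_div_le; auto. rewrite Rabs_Ropp.
    eapply Rle_trans; [apply Rabs_sub_mult_le; eauto | apply Hbudget; lra].
Qed.

Lemma cramer_zero A B C D u v :
  A * D - B * C <> 0 -> (D * u - B * v) / (A * D - B * C) = 0 ->
  (A * v - C * u) / (A * D - B * C) = 0 -> u = 0 /\ v = 0.
Proof.
  intros Hdet Hx Hy. split.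
  - replace u with (A * ((D * u - B * v) / (A * D - B * C)) + B * ((A * v - C * u) / (A * D - B * C)))
      by (field; auto).
    rewrite Hx, Hy. ring.
  - replace v with (C * ((D * u - B * v) / (A * D - B * C)) + D * ((A * v - C * u) / (A * D - B * C)))
      by (field; auto).
    rewrite Hx, Hy. ring.
Qed.

Definition chord_map (g1 g2 : R * R -> R) (A B C D : R) (q : R * R) : R * R :=
  (fst q - (D * g1 q - B * g2 q) / (A * D - B * C),
   snd q - (A * g2 q - C * g1 q) / (A * D - B * C)).

Section Chord.

Variables (g1 g2 : R * R -> R) (p0 : R * R) (A B C D eps r : R).
Hypothesis det_neq0 : A * D - B * C <> 0.
Hypothesis r_gt0 : 0 < r.
Hypothesis eps_small : 4 * (Rabs A + Rabs B + Rabs C + Rabs D) * eps <= Rabs (A * D - B * C).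
Hypothesis increments_close : forall q q', dist_max q p0 <= r -> dist_max q' p0 <= r ->
  exists A' B' C' D', mat_close eps A B C D A' B' C' D' /\
    g1 q - g1 q' = A' * (fst q - fst q') + B' * (snd q - snd q') /\
    g2 q - g2 q' = C' * (fst q - fst q') + D' * (snd q - snd q').

Let N := chord_map g1 g2 A B C D.

Lemma chord_map_lipschitz q q' : dist_max q p0 <= r -> dist_max q' p0 <= r ->
  dist_max (N q) (N q') <= / 2 * dist_max q q'.
Proof.
  intros Hq Hq'.
  destruct (increments_close q q' Hq Hq') as (A' & B' & C' & D' & Hclose & E1 & E2).
  destruct (chord_step_contracts eps A B C D A' B' C' D' (fst q - fst q') (snd q - snd q')
              det_neq0 Hclose eps_small) as [H1 H2].
  rewrite <- E1, <- E2 in H1, H2. unfold N, chord_map, dist_max in *.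
  set (Dt := A * D - B * C) in *.
  apply Rmax_lub; simpl.
  - replace (fst q - (D * g1 q - B * g2 q) / Dt - (fst q' - (D * g1 q' - B * g2 q') / Dt))
      with (fst q - fst q' - (D * (g1 q - g1 q') - B * (g2 q - g2 q')) / Dt)
      by (field; auto). lra.
  - replace (snd q - (A * g2 q - C * g1 q) / Dt - (snd q' - (A * g2 q' - C * g1 q') / Dt))
      with (snd q - snd q' - (A * (g2 q - g2 q') - C * (g1 q - g1 q')) / Dt)
      by (field; auto). lra.
Qed.

Lemma chord_map_fixed_iff q : N q = q <-> g1 q = 0 /\ g2 q = 0.
Proof.
  unfold N, chord_map. split.
  - intro Hq. apply (cramer_zero A B C D); auto.
    + apply (f_equal fst) in Hq. simpl in Hq. lra.
    + apply (f_equal snd) in Hq. simpl in Hq. lra.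
  - intros [Z1 Z2]. apply injective_projections; simpl; rewrite Z1, Z2; unfold Rdiv; ring.
Qed.

Lemma chord_unique_zero :
  Rabs (D * g1 p0 - B * g2 p0) <= r / 4 * Rabs (A * D - B * C) ->
  Rabs (A * g2 p0 - C * g1 p0) <= r / 4 * Rabs (A * D - B * C) ->
  exists q, dist_max q p0 <= r / 2 /\ g1 q = 0 /\ g2 q = 0 /\
    forall q', dist_max q' p0 <= r -> g1 q' = 0 -> g2 q' = 0 -> q' = q.
Proof.
  intros Hres1 Hres2.
  assert (N_p0 : dist_max (N p0) p0 <= r / 4).
  { unfold N, chord_map. apply dist_max_lub; simpl.
    - replace (fst p0 - (D * g1 p0 - B * g2 p0) / (A * D - B * C) - fst p0)
        with (- ((D * g1 p0 - B * g2 p0) / (A * D - B * C))) by ring.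
      rewrite Rabs_Ropp. apply Rabs_div_le; auto.
    - replace (snd p0 - (A * g2 p0 - C * g1 p0) / (A * D - B * C) - snd p0)
        with (- ((A * g2 p0 - C * g1 p0) / (A * D - B * C))) by ring.
      rewrite Rabs_Ropp. apply Rabs_div_le; auto. }
  assert (N_maps : forall q, dist_max q p0 <= r / 2 -> dist_max (N q) p0 <= r / 2).
  { intros q Hq. eapply Rle_trans; [apply (dist_max_triangle _ (N p0))|].
    pose proof (chord_map_lipschitz q p0 ltac:(lra) ltac:(rewrite dist_max_self; lra)). lra. }
  destruct (contraction_fixed_point N p0 (r / 2) (/ 2)) as [q [Hq Nq]];
    [lra | lra | lra | exact N_maps | intros; apply chord_map_lipschitz; lra |].
  destruct (proj1 (chord_map_fixed_iff q) Nq) as [Z1 Z2].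
  exists q. repeat split; auto.
  intros q' Hq' Z1' Z2'.
  assert (Hlip : dist_max (N q') (N q) <= / 2 * dist_max q' q)
    by (apply chord_map_lipschitz; lra).
  rewrite (proj2 (chord_map_fixed_iff q') (conj Z1' Z2')), Nq in Hlip.
  apply dist_max_le_half. lra.
Qed.

End Chord.

Definition dpow (n : nat) (x : R) : R := INR n * x ^ pred n.

Lemma partial_x_h1 a b d x y : partial_x (h1 a b d) (x, y) = dpow (2 * d) x.
Proof. unfold partial_x, h1, dpow; simpl. apply is_derive_unique. auto_derive; auto. ring. Qed.

Lemma partial_y_h1 a b d x y : partial_y (h1 a b d) (x, y) = a * dpow d y - 1.
Proof. unfold partial_y, h1, dpow; simpl. apply is_derive_unique. auto_derive; auto. ring. Qed.

Lemma partial_x_h2 a b d x y : partial_x (h2 a b d) (x, y) = b * dpow d x - 1.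
Proof. unfold partial_x, h2, dpow; simpl. apply is_derive_unique. auto_derive; auto. ring. Qed.

Lemma partial_y_h2 a b d x y : partial_y (h2 a b d) (x, y) = dpow (2 * d) y.
Proof. unfold partial_y, h2, dpow; simpl. apply is_derive_unique. auto_derive; auto. ring. Qed.

Lemma jacobian_det_eq a b d x y :
  jacobian_det a b d (x, y)
  = dpow (2 * d) x * dpow (2 * d) y - (a * dpow d y - 1) * (b * dpow d x - 1).
Proof. unfold jacobian_det. rewrite partial_x_h1, partial_y_h1, partial_x_h2, partial_y_h2. ring. Qed.

Lemma pow_sub_mvt n u v :
  exists w, Rmin u v <= w <= Rmax u v /\ u ^ n - v ^ n = dpow n w * (u - v).
Proof.
  destruct (MVT_gen (fun t => t ^ n) v u (dpow n)) as [w [Hw Hmvt]].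
  - intros t _. unfold dpow. auto_derive; auto. ring.
  - intros t _. apply derivable_continuous_pt, derivable_pt_pow.
  - exists w. rewrite Rmin_comm, Rmax_comm. split; assumption.
Qed.

Lemma Rabs_between_lt c e u v w :
  Rmin u v <= w <= Rmax u v -> Rabs (u - c) < e -> Rabs (v - c) < e -> Rabs (w - c) < e.
Proof.
  intros Hw Hu Hv. apply Rabs_def2 in Hu, Hv. apply Rabs_def1;
  unfold Rmin, Rmax in Hw; destruct (Rle_dec u v); lra.
Qed.

Lemma h_increments_near a b d p0 e q q' :
  dist_max q p0 < e -> dist_max q' p0 < e ->
  exists w1 w2 w3 w4,
    Rabs (w1 - fst p0) < e /\ Rabs (w2 - snd p0) < e /\
    Rabs (w3 - fst p0) < e /\ Rabs (w4 - snd p0) < e /\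
    h1 a b d q - h1 a b d q'
      = dpow (2 * d) w1 * (fst q - fst q') + (a * dpow d w2 - 1) * (snd q - snd q') /\
    h2 a b d q - h2 a b d q'
      = (b * dpow d w3 - 1) * (fst q - fst q') + dpow (2 * d) w4 * (snd q - snd q').
Proof.
  intros Hq Hq'.
  pose proof (Rle_lt_trans _ _ _ (dist_max_fst q p0) Hq) as Hx.
  pose proof (Rle_lt_trans _ _ _ (dist_max_snd q p0) Hq) as Hy.
  pose proof (Rle_lt_trans _ _ _ (dist_max_fst q' p0) Hq') as Hx'.
  pose proof (Rle_lt_trans _ _ _ (dist_max_snd q' p0) Hq') as Hy'.
  destruct (pow_sub_mvt (2 * d) (fst q) (fst q')) as [w1 [Hw1 E1]].
  destruct (pow_sub_mvt d (snd q) (snd q')) as [w2 [Hw2 E2]].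
  destruct (pow_sub_mvt d (fst q) (fst q')) as [w3 [Hw3 E3]].
  destruct (pow_sub_mvt (2 * d) (snd q) (snd q')) as [w4 [Hw4 E4]].
  exists w1, w2, w3, w4.
  repeat split; try (eapply Rabs_between_lt; eauto).
  - unfold h1. replace (fst q ^ (2 * d) + a * snd q ^ d - snd q
                        - (fst q' ^ (2 * d) + a * snd q' ^ d - snd q'))
      with ((fst q ^ (2 * d) - fst q' ^ (2 * d)) + a * (snd q ^ d - snd q' ^ d)
            - (snd q - snd q')) by ring.
    rewrite E1, E2. ring.
  - unfold h2. replace (snd q ^ (2 * d) + b * fst q ^ d - fst q
                        - (snd q' ^ (2 * d) + b * fst q' ^ d - fst q'))
      with ((snd q ^ (2 * d) - snd q' ^ (2 * d)) + b * (fst q ^ d - fst q' ^ d)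
            - (fst q - fst q')) by ring.
    rewrite E3, E4. ring.
Qed.

Lemma continuous_near (f : R * R -> R) (p : R * R) (eps : R) :
  continuous f p -> 0 < eps -> exists e, 0 < e /\ forall q,
    Rabs (fst q - fst p) < e -> Rabs (snd q - snd p) < e -> Rabs (f q - f p) < eps.
Proof.
  intros Hf Heps.
  destruct (proj1 (filterlim_locally f (f p)) Hf (mkposreal eps Heps)) as [e He].
  exists e. split; [apply cond_pos|]. intros q Hx Hy. exact (He q (conj Hx Hy)).
Qed.

Lemma dpow_fst_continuous n (p : R * R) : continuous (fun q => dpow n (fst q)) p.
Proof.
  destruct p as [x y]. refine (continuous_comp fst (dpow n) (x, y) _ _); [exact (continuous_fst x y)|].
  apply (ex_derive_continuous (V := R_NormedModule)). unfold dpow. auto_derive. auto.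
Qed.

Lemma scaled_dpow_continuous n (p : R * R) :
  continuous (fun q => fst q * dpow n (snd q)) p.
Proof.
  destruct p as [a y]. refine (continuous_mult fst (fun q => dpow n (snd q)) (a, y) _ _).
  - exact (continuous_fst a y).
  - refine (continuous_comp snd (dpow n) (a, y) _ _); [exact (continuous_snd a y)|].
    apply (ex_derive_continuous (V := R_NormedModule)). unfold dpow. auto_derive. auto.
Qed.

Lemma jacobian_entries_near d a0 b0 x0 y0 eps : 0 < eps -> exists e, 0 < e /\
  forall a b w1 w2 w3 w4, Rabs (a - a0) < e -> Rabs (b - b0) < e ->
    Rabs (w1 - x0) < e -> Rabs (w2 - y0) < e -> Rabs (w3 - x0) < e -> Rabs (w4 - y0) < e ->
    mat_close eps (dpow (2 * d) x0) (a0 * dpow d y0 - 1) (b0 * dpow d x0 - 1) (dpow (2 * d) y0)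
                  (dpow (2 * d) w1) (a * dpow d w2 - 1) (b * dpow d w3 - 1) (dpow (2 * d) w4).
Proof.
  intro Heps.
  destruct (continuous_near _ (x0, 0) eps (dpow_fst_continuous (2 * d) _) Heps) as [e1 [He1 H1]].
  destruct (continuous_near _ (y0, 0) eps (dpow_fst_continuous (2 * d) _) Heps) as [e2 [He2 H2]].
  destruct (continuous_near _ (a0, y0) eps (scaled_dpow_continuous d _) Heps) as [e3 [He3 H3]].
  destruct (continuous_near _ (b0, x0) eps (scaled_dpow_continuous d _) Heps) as [e4 [He4 H4]].
  destruct (Rmin4_le e1 e2 e3 e4) as (Hle1 & Hle2 & Hle3 & Hle4).
  exists (Rmin (Rmin e1 e2) (Rmin e3 e4)). split; [repeat apply Rmin_glb_lt; auto|].
  intros a b w1 w2 w3 w4 Ha Hb Hw1 Hw2 Hw3 Hw4.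
  repeat split; apply Rlt_le.
  - apply (H1 (w1, 0)); simpl; [lra | rewrite Rminus_diag, Rabs_R0; lra].
  - replace (a * dpow d w2 - 1 - (a0 * dpow d y0 - 1))
      with (a * dpow d w2 - a0 * dpow d y0) by ring.
    apply (H3 (a, w2)); simpl; lra.
  - replace (b * dpow d w3 - 1 - (b0 * dpow d x0 - 1))
      with (b * dpow d w3 - b0 * dpow d x0) by ring.
    apply (H4 (b, w3)); simpl; lra.
  - apply (H2 (w4, 0)); simpl; [lra | rewrite Rminus_diag, Rabs_R0; lra].
Qed.

Lemma isolated_root_of_unique a b d p0 q r :
  0 < r -> is_root a b d q -> dist_max q p0 <= r / 2 ->
  (forall q', dist_max q' p0 <= r -> is_root a b d q' -> q' = q) -> isolated_root a b d q.
Proof.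
  intros Hr Hq Hclose Huniq. split; [exact Hq|].
  exists (mkposreal (r / 2) ltac:(lra)). intros [x y] [Bx By].
  change (Rabs (x - fst q) < r / 2) in Bx. change (Rabs (y - snd q) < r / 2) in By.
  assert (Hnear : dist_max (x, y) p0 <= r).
  { assert (dist_max (x, y) q <= r / 2) by (apply dist_max_lub; simpl; lra).
    pose proof (dist_max_triangle (x, y) q p0). lra. }
  destruct (Rle_lt_or_eq_dec 0 (dist_max (x, y) q) (dist_max_nonneg _ _)) as [Hpos | Hzero].
  - right. intro Hroot. rewrite (Huniq _ Hnear Hroot), dist_max_self in Hpos. lra.
  - left. apply dist_max_le_0. lra.
Qed.

Lemma det_margin K Dt : 0 <= K -> Dt <> 0 ->
  exists eps, 0 < eps /\ eps <= 1 /\ 4 * K * eps <= Rabs Dt /\ (K + 2) * eps < Rabs Dt.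
Proof.
  intros HK HDt. apply Rabs_pos_lt in HDt.
  exists (Rmin 1 (Rabs Dt / (8 * K + 8))).
  pose proof (Rmin_l 1 (Rabs Dt / (8 * K + 8))) as Hle1.
  pose proof (Rmin_r 1 (Rabs Dt / (8 * K + 8))) as Hle2.
  set (eps := Rmin 1 (Rabs Dt / (8 * K + 8))) in *.
  assert (Heps : 0 < eps) by (apply Rmin_glb_lt; [lra | apply Rdiv_lt_0_compat; lra]).
  apply Rmult_le_compat_r with (r := 8 * K + 8) in Hle2; [|lra].
  replace (Rabs Dt / (8 * K + 8) * (8 * K + 8)) with (Rabs Dt) in Hle2 by (field; lra).
  repeat split; nra.
Qed.

(* Since [(x0, y0)] is a root for [(a0, b0)], the residual at [(a, b)] is linear in [(a - a0, b - b0)]. *)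
Lemma shifted_residual_small d a0 b0 x0 y0 K s :
  0 < x0 -> 0 < y0 -> 0 <= K -> 0 < s -> is_root a0 b0 d (x0, y0) ->
  exists e, 0 < e /\ forall a b P Q, Rabs (a - a0) < e -> Rabs (b - b0) < e ->
    Rabs P + Rabs Q <= K -> Rabs (P * h1 a b d (x0, y0) - Q * h2 a b d (x0, y0)) <= s.
Proof.
  intros Hx0 Hy0 HK Hs [Root1 Root2].
  pose proof (pow_le x0 d ltac:(lra)); pose proof (pow_le y0 d ltac:(lra)).
  set (M := x0 ^ d + y0 ^ d).
  exists (s / ((K + 1) * (M + 1))).
  split; [apply Rdiv_lt_0_compat; [lra | apply Rmult_lt_0_compat; unfold M; lra]|].
  intros a b P Q Ha Hb HPQ.
  set (e := s / ((K + 1) * (M + 1))) in *.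
  assert (E1 : h1 a b d (x0, y0) = (a - a0) * y0 ^ d) by (unfold h1 in *; cbn [fst snd] in *; lra).
  assert (E2 : h2 a b d (x0, y0) = (b - b0) * x0 ^ d) by (unfold h2 in *; cbn [fst snd] in *; lra).
  rewrite E1, E2.
  eapply Rle_trans; [apply Rabs_sub_mult_le with (k := e * M)|].
  - rewrite Rabs_mult, (Rabs_pos_eq (y0 ^ d)) by lra.
    apply Rmult_le_compat; [apply Rabs_pos | lra | lra | unfold M; lra].
  - rewrite Rabs_mult, (Rabs_pos_eq (x0 ^ d)) by lra.
    apply Rmult_le_compat; [apply Rabs_pos | lra | lra | unfold M; lra].
  - assert (Hbudget : (K + 1) * (M + 1) * e = s) by (unfold e, M; field; split; lra).
    assert (HeM : 0 <= e * M) by (pose proof (Rabs_pos (a - a0)); unfold M in *; nra).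
    apply Rmult_le_compat_r with (r := e * M) in HPQ; [|exact HeM].
    assert (K * (e * M) <= (K + 1) * (M + 1) * e) by (unfold M in *; nra).
    lra.
Qed.

Definition counted_root (a b : R) (d : nat) (p : R * R) : Prop :=
  in_positive_quadrant p /\ nondegenerate_root a b d p /\ isolated_root a b d p.

Lemma counted_root_persists d a0 b0 p0 rho :
  in_positive_quadrant p0 -> nondegenerate_root a0 b0 d p0 -> 0 < rho ->
  exists e, 0 < e /\ forall a b, Rabs (a - a0) < e -> Rabs (b - b0) < e ->
    exists q, dist_max q p0 < rho /\ counted_root a b d q.
Proof.
  destruct p0 as [x0 y0]. intros [Hx0 Hy0] [Hroot Hjac] Hrho. simpl in Hx0, Hy0.
  rewrite jacobian_det_eq in Hjac.
  set (A0 := dpow (2 * d) x0) in *. set (B0 := a0 * dpow d y0 - 1) in *.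
  set (C0 := b0 * dpow d x0 - 1) in *. set (D0 := dpow (2 * d) y0) in *.
  set (K := Rabs A0 + Rabs B0 + Rabs C0 + Rabs D0).
  pose proof (Rabs_pos A0); pose proof (Rabs_pos B0); pose proof (Rabs_pos C0); pose proof (Rabs_pos D0).
  destruct (det_margin K (A0 * D0 - B0 * C0) ltac:(unfold K; lra) Hjac)
    as (eps & Heps & Heps1 & Heps_chord & Heps_det).
  destruct (jacobian_entries_near d a0 b0 x0 y0 eps Heps) as [e_J [He_J Hnear]].
  set (r := Rmin (Rmin (e_J / 2) rho) (Rmin (x0 / 2) (y0 / 2))).
  assert (Hr : 0 < r) by (unfold r; repeat apply Rmin_glb_lt; lra).
  destruct (Rmin4_le (e_J / 2) rho (x0 / 2) (y0 / 2)) as (Hr_J & Hr_rho & Hr_x & Hr_y).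
  fold r in Hr_J, Hr_rho, Hr_x, Hr_y.
  assert (HDt : 0 < Rabs (A0 * D0 - B0 * C0)) by (apply Rabs_pos_lt; exact Hjac).
  destruct (shifted_residual_small d a0 b0 x0 y0 K (r / 4 * Rabs (A0 * D0 - B0 * C0)))
    as [e_res [He_res Hres]]; auto; [unfold K; lra | nra |].
  exists (Rmin e_J e_res). split; [apply Rmin_glb_lt; auto|].
  intros a b Ha Hb.
  pose proof (Rmin_l e_J e_res); pose proof (Rmin_r e_J e_res).
  destruct (chord_unique_zero (h1 a b d) (h2 a b d) (x0, y0) A0 B0 C0 D0 eps r)
    as (q & Hq & Z1 & Z2 & Huniq).
  - exact Hjac.
  - exact Hr.
  - exact Heps_chord.
  - intros q q' Hq Hq'.
    destruct (h_increments_near a b d (x0, y0) e_J q q')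
      as (w1 & w2 & w3 & w4 & Hw1 & Hw2 & Hw3 & Hw4 & E1 & E2); [lra | lra |].
    exists (dpow (2 * d) w1), (a * dpow d w2 - 1), (b * dpow d w3 - 1), (dpow (2 * d) w4).
    split; [apply Hnear; cbn [fst snd] in *; lra | split; assumption].
  - apply Hres; [lra | lra | unfold K; lra].
  - rewrite Rabs_minus_sym. apply Hres; [lra | lra | unfold K; lra].
  - exists q. split; [lra|]. destruct q as [x y].
    pose proof (dist_max_fst (x, y) (x0, y0)) as Hx; pose proof (dist_max_snd (x, y) (x0, y0)) as Hy.
    cbn [fst snd] in Hx, Hy.
    split; [|split].
    + pose proof (Rle_abs (x0 - x)); pose proof (Rle_abs (y0 - y)).
      rewrite Rabs_minus_sym in Hx, Hy. split; simpl; lra.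
    + split; [split; assumption|]. rewrite jacobian_det_eq.
      apply (det_close_neq0 eps A0 B0 C0 D0); [apply Hnear; lra | exact Heps1 | exact Heps_det].
    + apply (isolated_root_of_unique a b d (x0, y0) (x, y) r Hr (conj Z1 Z2) Hq).
      intros q' Hq' [Z1' Z2']. apply Huniq; assumption.
Qed.

Lemma dist_max_away_from_list x l :
  ~ In x l -> exists s, 0 < s /\ forall p, In p l -> s <= dist_max x p.
Proof.
  induction l as [|y l IH]; intro Hx.
  - exists 1. split; [lra | intros p []].
  - destruct IH as [s [Hs Hl]]; [intro; apply Hx; now right|].
    exists (Rmin (dist_max x y) s).
    split; [apply Rmin_glb_lt; auto; apply dist_max_pos; intro; apply Hx; now left|].
    intros p [<- | Hp]; [apply Rmin_l | eapply Rle_trans; [apply Rmin_r | auto]].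
Qed.

Lemma NoDup_separated l : NoDup l -> exists rho, 0 < rho /\
  forall p p', In p l -> In p' l -> p <> p' -> 2 * rho <= dist_max p p'.
Proof.
  induction 1 as [|x l Hx _ [rho [Hrho Hsep]]].
  - exists 1. split; [lra | intros p p' []].
  - destruct (dist_max_away_from_list x l Hx) as [s [Hs Haway]].
    exists (Rmin rho (s / 2)). split; [apply Rmin_glb_lt; lra|].
    pose proof (Rmin_l rho (s / 2)); pose proof (Rmin_r rho (s / 2)).
    intros p p' [<- | Hp] [<- | Hp'] Hne.
    + congruence.
    + specialize (Haway p' Hp'). lra.
    + specialize (Haway p Hp). rewrite dist_max_comm. lra.
    + specialize (Hsep p p' Hp Hp' Hne). lra.
Qed.

Lemma Forall2_In_r {A B} (Rel : A -> B -> Prop) l l' q :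
  Forall2 Rel l l' -> In q l' -> exists p, In p l /\ Rel p q.
Proof.
  induction 1 as [|p q' l l' Hpq _ IH]; [intros []|]. intros [<- | Hq].
  - exists p. split; [now left | exact Hpq].
  - destruct (IH Hq) as [p' [Hp' Hrel]]. exists p'. split; [now right | exact Hrel].
Qed.

Lemma NoDup_of_close rho l l' :
  NoDup l -> (forall p p', In p l -> In p' l -> p <> p' -> 2 * rho <= dist_max p p') ->
  Forall2 (fun p q => dist_max q p < rho) l l' -> NoDup l'.
Proof.
  intros Hl Hsep Hclose. revert Hl Hsep.
  induction Hclose as [|p q l l' Hpq Hclose IH]; intros Hl Hsep; [constructor|].
  apply NoDup_cons_iff in Hl as [Hp Hl]. constructor.
  - intro Hq. destruct (Forall2_In_r _ _ _ _ Hclose Hq) as [p' [Hp' Hp'q]].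
    assert (Hne : p <> p') by (intros ->; contradiction).
    specialize (Hsep p p' (or_introl eq_refl) (or_intror Hp') Hne).
    pose proof (dist_max_triangle p q p'). rewrite (dist_max_comm p q) in *. lra.
  - apply IH; auto. intros; apply Hsep; auto; now right.
Qed.

Lemma counted_roots_persist d a0 b0 rho l :
  0 < rho -> List.Forall (counted_root a0 b0 d) l ->
  exists e, 0 < e /\ forall a b, Rabs (a - a0) < e -> Rabs (b - b0) < e ->
    exists l', Forall2 (fun p q => dist_max q p < rho) l l' /\ List.Forall (counted_root a b d) l'.
Proof.
  intro Hrho. induction 1 as [|p l [Hquad [Hnondeg _]] _ [e_l [He_l IH]]].
  - exists 1. split; [lra|]. intros. exists nil. split; constructor.
  - destruct (counted_root_persists d a0 b0 p rho Hquad Hnondeg Hrho) as [e_p [He_p Hp]].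
    exists (Rmin e_l e_p). split; [apply Rmin_glb_lt; auto|].
    intros a b Ha Hb. pose proof (Rmin_l e_l e_p); pose proof (Rmin_r e_l e_p).
    destruct (IH a b ltac:(lra) ltac:(lra)) as [l' [Hclose Hcounted]].
    destruct (Hp a b ltac:(lra) ltac:(lra)) as [q [Hq Hcq]].
    exists (q :: l'). split; constructor; auto.
Qed.

Definition swap (p : R * R) : R * R := (snd p, fst p).

Lemma counted_root_swap a b d p : counted_root a b d p -> counted_root b a d (swap p).
Proof.
  destruct p as [x y]. intros [[Hx Hy] [[[R1 R2] Hjac] [_ [e He]]]].
  unfold swap; simpl. repeat split; auto.
  - rewrite jacobian_det_eq in *. contradict Hjac. rewrite <- Hjac. ring.
  - exists e. intros [u v] [Bu Bv].
    destruct (He (v, u) (conj Bv Bu)) as [Heq | Hnot].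
    + left. now injection Heq as -> ->.
    + right. intros [S1 S2]. apply Hnot. split; assumption.
Qed.

Lemma E_swap d a b : E d (a, b) -> E d (b, a).
Proof.
  intros [l [Hnodup [Hlen Hcounted]]]. exists (map swap l). repeat split.
  - apply Injective_map_NoDup; [|exact Hnodup].
    intros [x y] [u v] H. now injection H as -> ->.
  - now rewrite length_map.
  - apply Forall_map. eapply Forall_impl; [|exact Hcounted]. apply counted_root_swap.
Qed.

Theorem proposition1p4 (d : nat) :
  open (E d) /\ (forall a b : R, E d (a, b) <-> E d (b, a)).
Proof.
  split.
  - intros [a0 b0] [l [Hnodup [Hlen Hcounted]]].
    destruct (NoDup_separated l Hnodup) as [rho [Hrho Hsep]].
    destruct (counted_roots_persist d a0 b0 rho l Hrho Hcounted) as [e [He Hpersist]].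
    exists (mkposreal e He). intros [a b] [Ha Hb].
    destruct (Hpersist a b Ha Hb) as [l' [Hclose Hcounted']].
    exists l'. repeat split.
    + exact (NoDup_of_close rho l l' Hnodup Hsep Hclose).
    + now rewrite <- (Forall2_length Hclose).
    + exact Hcounted'.
  - intros a b. split; apply E_swap.
Qed.
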